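(* Let $\mathfrak{D}$ be a diagram, $\mathfrak{T}$ a spanning tree for it of depth $d$. Then $L^{\mathfrak{D}}=\mathrm{Log}(\{\mathfrak{F}\mid\mathfrak{F}\models\forall x_0\,\mathsf{e}^{\mathfrak{D}}(x_0)\})=\mathsf{K}+\{\gamma^{\mathfrak{D}}_m\mid m\in\omega\}$.
   Context: Fix an index set $\Lambda$; Kripke frames $(W,(R_\lambda)_{\lambda\in\Lambda})$, modal operators $\Diamond_\lambda,\Box_\lambda$. A diagram is a finite pointed rooted Kripke frame $\mathfrak{D}=(\{x_0,\dots,x_n\},(R^{\mathfrak{D}}_\lambda),x_0)$ (every point reachable from $x_0$ by a directed path); $\mathsf{e}^{\mathfrak{D}}(x_0)=\exists x_1\dots\exists x_n\bigwedge\{x_iR_\lambda x_j\mid x_iR^{\mathfrak{D}}_\lambda x_j\}$. $\mathrm{Log}(\mathcal{C})$ is the set of modal formulas valid on all frames in $\mathcal{C}$, and $\mathsf{K}+\Sigma$ the least normal modal logic containing $\Sigma$. A spanning tree $\mathfrak{T}$ for $\mathfrak{D}$ is a subframe on the same points with $R^{\mathfrak{T}}_\lambda\subseteq R^{\mathfrak{D}}_\lambda$, no edges into $x_0$, and a unique directed path from $x_0$ to each other point; its depth $d$ is the maximal length of such paths. With nominals $j_0,\dots,j_n$: $\chi_i=j_i\wedge\bigwedge_{x_iR^{\mathfrak{D}}_\lambda x_k}\Diamond_\lambda j_k$, $\eta_i=\chi_i\wedge\bigwedge_{x_iR^{\mathfrak{T}}_\lambda x_k}\Diamond_\lambda\eta_k$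 (recursively from leaves), $\eta^{\mathfrak{D}}=\eta_0$; for a finite set $\Psi$ of modal formulas, $\gamma^{\mathfrak{D}}_\Psi=\bigvee_{\kappa:\{0,\dots,n\}\to\Psi}\eta^{\mathfrak{D}}(\kappa(0),\dots,\kappa(n))$, where $\eta^{\mathfrak{D}}(\phi_0,\dots,\phi_n)$ substitutes $\phi_l$ for $j_l$. Finally $\gamma^{\mathfrak{D}}_m=\Box^{\le d}(p_1\vee\dots\vee p_m)\to\gamma^{\mathfrak{D}}_{\{p_1,\dots,p_m\}}$, where $\Box^{\le d}\phi$ is the conjunction of all $\Box_{\lambda_1}\cdots\Box_{\lambda_k}\phi$ with $k\le d$ and $\lambda_i$ ranging over the indices occurring in $\mathfrak{D}$. *)

From Stdlib Require Import List Arith.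
Import ListNotations.
Set Implicit Arguments.

Inductive form (L : Type) : Type :=
| Var : nat -> form L
| Bot : form L
| Imp : form L -> form L -> form L
| Box : L -> form L -> form L.
Arguments Var {L} _.
Arguments Bot {L}.

Definition Neg {L} (a : form L) := Imp a Bot.
Definition Top {L} : form L := Neg Bot.
Definition Or {L} (a b : form L) := Imp (Neg a) b.
Definition And {L} (a b : form L) := Neg (Imp a (Neg b)).
Definition Dia {L} (l : L) (a : form L) := Neg (Box l (Neg a)).
Definition bigAnd {L} (s : list (form L)) := fold_right And Top s.
Definition bigOr {L} (s : list (form L)) := fold_right Or Bot s.

Record frame (L : Type) := Frame { W : Type; R : L -> W -> W -> Prop }.

Fixpoint sat {L} (F : frame L) (V : nat -> W F -> Prop) (w : W F) (a : form L) : Prop :=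
  match a with
  | Var p => V p w
  | Bot => False
  | Imp a b => sat F V w a -> sat F V w b
  | Box l a => forall v, R F l w v -> sat F V v a
  end.

Definition valid {L} (F : frame L) (a : form L) : Prop :=
  forall V w, sat F V w a.

Definition Log {L} (C : frame L -> Prop) (a : form L) : Prop :=
  forall F, C F -> valid F a.

(* classical tautologies: valid under every boolean valuation treating
   variables and boxed formulas as atoms *)
Fixpoint peval {L} (v : form L -> bool) (a : form L) : bool :=
  match a with
  | Var _ => v a
  | Bot => false
  | Imp a b => implb (peval v a) (peval v b)
  | Box _ _ => v a
  end.
Definition tautology {L} (a : form L) : Prop := forall v, peval v a = true.

Fixpoint subst {L} (s : nat -> form L) (a : form L) : form L :=
  match a with
  | Var p => s p
  | Bot => Bot
  | Imp a b => Imp (subst s a) (subst s b)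
  | Box l a => Box l (subst s a)
  end.

Inductive KPlus {L} (Sigma : form L -> Prop) : form L -> Prop :=
| KP_taut a : tautology a -> KPlus Sigma a
| KP_K l a b : KPlus Sigma (Imp (Box l (Imp a b)) (Imp (Box l a) (Box l b)))
| KP_ax a : Sigma a -> KPlus Sigma a
| KP_MP a b : KPlus Sigma (Imp a b) -> KPlus Sigma a -> KPlus Sigma b
| KP_Nec l a : KPlus Sigma a -> KPlus Sigma (Box l a)
| KP_US s a : KPlus Sigma a -> KPlus Sigma (subst s a).

(* A diagram on points {0,...,n} (root x_0 = 0) given by its finite list of
   labelled edges (i, l, k) meaning x_i R_l x_k. *)
Record diagram (L : Type) := Diagram { dsize : nat; dedges : list (nat * L * nat) }.

Inductive dpath {L} (E : list (nat * L * nat)) : nat -> list (L * nat) -> nat -> Prop :=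
| dpath_nil x : dpath E x [] x
| dpath_cons x l y p z : In (x, l, y) E -> dpath E y p z -> dpath E x ((l, y) :: p) z.

Definition wf_diagram {L} (D : diagram L) : Prop :=
  forall i l k, In (i, l, k) (dedges D) -> i <= dsize D /\ k <= dsize D.

Definition rooted {L} (D : diagram L) : Prop :=
  forall i, i <= dsize D -> exists p, dpath (dedges D) 0 p i.

Definition spanning_tree {L} (D : diagram L) (T : list (nat * L * nat)) : Prop :=
  (forall e, In e T -> In e (dedges D)) /\
  (forall i l, ~ In (i, l, 0) T) /\
  (forall i, 1 <= i <= dsize D ->
     exists p, dpath T 0 p i /\ forall q, dpath T 0 q i -> q = p).

Definition tree_depth {L} (D : diagram L) (T : list (nat * L * nat)) (d : nat) : Prop :=
  (forall i p, i <= dsize D -> dpath T 0 p i -> length p <= d) /\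
  (exists i p, i <= dsize D /\ dpath T 0 p i /\ length p = d).

Definition frame_cond {L} (D : diagram L) (F : frame L) : Prop :=
  forall x0 : W F, exists f : nat -> W F,
    f 0 = x0 /\ forall i l k, In (i, l, k) (dedges D) -> R F l (f i) (f k).

(* chi_i and eta_i with the nominals j_0..j_n replaced by j 0, ..., j n *)
Definition chi {L} (D : diagram L) (j : nat -> form L) (i : nat) : form L :=
  And (j i) (bigAnd (flat_map (fun '(x, l, k) =>
                        if Nat.eqb x i then [Dia l (j k)] else []) (dedges D))).

(* recursion from the leaves; the fuel (dsize D + 1) exceeds the depth *)
Fixpoint eta_aux {L} (D : diagram L) (T : list (nat * L * nat)) (j : nat -> form L)
    (fuel : nat) (i : nat) : form L :=
  match fuel with
  | 0 => chi D j i
  | S f => And (chi D j i) (bigAnd (flat_map (fun '(x, l, k) =>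
                   if Nat.eqb x i then [Dia l (eta_aux D T j f k)] else []) T))
  end.

Definition eta {L} (D : diagram L) (T : list (nat * L * nat)) (j : nat -> form L) : form L :=
  eta_aux D T j (S (dsize D)) 0.

Fixpoint words {A} (k : nat) (s : list A) : list (list A) :=
  match k with
  | 0 => [[]]
  | S k' => flat_map (fun a => map (cons a) (words k' s)) s
  end.

(* gamma^D_Psi : disjunction over all kappa : {0..n} -> Psi *)
Definition gammaPsi {L} (D : diagram L) (T : list (nat * L * nat)) (Psi : list (form L)) : form L :=
  bigOr (map (fun w => eta D T (fun i => nth i w Bot)) (words (S (dsize D)) Psi)).

Definition indices {L} (D : diagram L) : list L := map (fun '(_, l, _) => l) (dedges D).

Definition boxes {L} (ls : list L) (a : form L) : form L := fold_right (@Box L) a ls.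
Definition box_upto {L} (D : diagram L) (d : nat) (a : form L) : form L :=
  bigAnd (flat_map (fun k => map (fun ls => boxes ls a) (words k (indices D))) (seq 0 (S d))).

Definition ps {L} (m : nat) : list (form L) := map Var (seq 1 m).

Definition gamma_m {L} (D : diagram L) (T : list (nat * L * nat)) (d m : nat) : form L :=
  Imp (box_upto D d (bigOr (ps m))) (gammaPsi D T (ps m)).

(* Soundness: if [Box^{<=d} (p_1 \/ ... \/ p_m)] holds at [x_0] in a frame with
   [forall x_0, e^D(x_0)], then every point of a realisation of [D] lies at the end
   of a tree path of length at most [d] from [x_0], hence satisfies some [p_j];
   labelling every point by such a [p_j] makes one disjunct of [gamma^D_Psi] true.

   Completeness: the logic is canonical.  Given a maximal consistent set [G0], the
   atoms of any finite list of formulas decide each of them, and substituting these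
   atoms for the [p_j] turns the antecedent of [gamma_m] into a theorem; so [G0]
   contains an [eta] whose labels decide the list.  By Zorn's lemma we extend the
   requirement "the formulas of [G0] hold at [x_0]" to a maximal family of
   requirements "[p] holds at [x_i]" each finite part of which is realised by such
   an [eta]; at each point these requirements form a maximal consistent set, and
   these sets realise [D] in the canonical frame with [G0] at the root. *)

From Stdlib Require Import List Arith Lia Classical ClassicalEpsilon
  FunctionalExtensionality PropExtensionality ProofIrrelevance.
From mathcomp Require classical_sets.
Import ListNotations.

Definition chain {T : Type} (F : (T -> Prop) -> Prop) : Prop :=
  forall X Y, F X -> F Y -> (forall t, X t -> Y t) \/ (forall t, Y t -> X t).

Definition chain_union {T : Type} (F : (T -> Prop) -> Prop) : T -> Prop :=
  fun t => exists X, F X /\ X t.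

Lemma chain_union_list {T : Type} (F : (T -> Prop) -> Prop) (xs : list T) :
  (exists X, F X) -> chain F ->
  exists X, F X /\ forall x, In x xs -> chain_union F x -> X x.
Proof.
  intros [X0 F0] Fchain. induction xs as [|x xs [X [FX HX]]].
  - exists X0; split; [exact F0|intros x []].
  - destruct (classic (chain_union F x)) as [[Y [FY Yx]]|Nx].
    + destruct (Fchain X Y FX FY) as [XY|YX].
      * exists Y; split; [exact FY|]. intros y [<-|Hy] Uy; auto.
      * exists X; split; [exact FX|]. intros y [<-|Hy] Uy; auto.
    + exists X; split; [exact FX|]. intros y [<-|Hy] Uy; [contradiction|auto].
Qed.

Section Zorn.
Import classical_sets.

Lemma zorn_maximal_superset {T : Type} (P : (T -> Prop) -> Prop) (A0 : T -> Prop) :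
  P A0 ->
  (forall F, (exists X, F X) -> (forall X, F X -> P X) -> chain F -> P (chain_union F)) ->
  exists M, (forall t, A0 t -> M t) /\ P M /\ (forall t, P (fun u => M u \/ u = t) -> M t).
Proof.
  intros PA0 Punion.
  assert (Pext : forall X Y, (forall t, X t <-> Y t) -> P X -> P Y).
  { intros X Y XY PX; replace Y with X; [exact PX|].
    apply functional_extensionality; intro t; apply propositional_extensionality, XY. }
  (* Zorn's lemma is applied to the sets B with P (A0 ∪ B), so that the union of the
     empty chain is covered by [P A0]. *)
  destruct (@Zorn_bigcup T (fun B => P (fun t => A0 t \/ B t))) as [A [PA Amax]].
  - intros F FP Ftot.
    destruct (classic (exists X, F X)) as [[X FX]|Fempty].
    + apply (Pext (chain_union (fun Y => exists X, F X /\ Y = (fun t => A0 t \/ X t)))).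
      * intro t; split.
        -- intros [Y [[X' [FX' ->]] [Ht|Ht]]]; [now left|right; exists X'; auto].
        -- intros [Ht|[X' FX' Ht]];
             [exists (fun t => A0 t \/ X t)|exists (fun t => A0 t \/ X' t)]; split; eauto.
      * apply Punion.
        -- exists (fun t => A0 t \/ X t), X; auto.
        -- intros Y [X' [FX' ->]]; exact (FP X' FX').
        -- intros Y Z [X1 [F1 ->]] [X2 [F2 ->]].
           destruct (Ftot X1 X2 F1 F2) as [S|S]; [left|right]; intros t [Ht|Ht]; auto.
    + apply (Pext A0); [|exact PA0].
      intro t; split; [now left|intros [Ht|[X FX _]]; [exact Ht|exfalso; eauto]].
  - exists (fun t => A0 t \/ A t); split; [now left|split; [exact PA|]].
    intros t Pt; right; apply NNPP; intro nAt.
    apply (Amax (fun u => A u \/ u = t)).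
    + split; [intros u Hu; now left|intro S; exact (nAt (S t (or_intror eq_refl)))].
    + refine (Pext _ _ _ Pt); intro u; tauto.
Qed.

End Zorn.

Ltac solve_tautology :=
  let v := fresh "v" in
  intro v; simpl;
  repeat match goal with
  | |- context [peval v ?x] => destruct (peval v x)
  | |- context [v ?x] => destruct (v x)
  end; reflexivity.

Ltac premises := repeat apply Forall_cons; try apply Forall_nil.

Lemma peval_bigAnd {L} (v : form L -> bool) s : peval v (bigAnd s) = forallb (peval v) s.
Proof.
  induction s as [|a s IH]; simpl; [reflexivity|].
  rewrite IH; destruct (peval v a), (forallb (peval v) s); reflexivity.
Qed.

Lemma peval_bigOr {L} (v : form L -> bool) s : peval v (bigOr s) = existsb (peval v) s.
Proof.
  induction s as [|a s IH]; simpl; [reflexivity|].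
  rewrite IH; destruct (peval v a), (existsb (peval v) s); reflexivity.
Qed.

Section Derivability.
Context {L : Type} {Sig : form L -> Prop}.
Notation Thm := (KPlus Sig).

Fixpoint imps (xs : list (form L)) (y : form L) : form L :=
  match xs with [] => y | x :: r => Imp x (imps r y) end.

Lemma thm_tauto xs y : Forall Thm xs -> tautology (imps xs y) -> Thm y.
Proof.
  intros Hxs Ht; apply (KP_taut Sig) in Ht; revert Ht.
  induction Hxs as [|x xs Hx _ IH]; simpl; [auto|].
  intro H; apply IH; exact (KP_MP H Hx).
Qed.

Lemma thm_box_mono l a b : Thm (Imp a b) -> Thm (Imp (Box l a) (Box l b)).
Proof. intro H; exact (KP_MP (KP_K Sig l a b) (KP_Nec l H)). Qed.

Lemma thm_box_bigAnd l s : Thm (Imp (bigAnd (map (Box l) s)) (Box l (bigAnd s))).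
Proof.
  induction s as [|x s IH]; simpl.
  - apply (thm_tauto [Box l Top]); [premises|solve_tautology].
    apply KP_Nec, KP_taut; solve_tautology.
  - assert (Hconj : Thm (Imp (Box l x) (Box l (Imp (bigAnd s) (And x (bigAnd s)))))).
    { apply thm_box_mono, KP_taut; solve_tautology. }
    apply (thm_tauto [Imp (bigAnd (map (Box l) s)) (Box l (bigAnd s));
                      Imp (Box l x) (Box l (Imp (bigAnd s) (And x (bigAnd s))));
                      Imp (Box l (Imp (bigAnd s) (And x (bigAnd s))))
                          (Imp (Box l (bigAnd s)) (Box l (And x (bigAnd s))))]);
      [premises; [exact IH|exact Hconj|apply KP_K]|solve_tautology].
Qed.

Lemma thm_bigAnd xs : Forall Thm xs -> Thm (bigAnd xs).
Proof.
  induction 1 as [|x xs Hx _ IH]; simpl.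
  - apply KP_taut; solve_tautology.
  - apply (thm_tauto [x; bigAnd xs]); [premises; auto|solve_tautology].
Qed.

Lemma thm_imp_bigAnd y xs : Forall (fun x => Thm (Imp y x)) xs -> Thm (Imp y (bigAnd xs)).
Proof.
  induction 1 as [|x xs Hx _ IH]; simpl.
  - apply KP_taut; solve_tautology.
  - apply (thm_tauto [Imp y x; Imp y (bigAnd xs)]); [premises; auto|solve_tautology].
Qed.

Lemma thm_bigAnd_elem x xs : In x xs -> Thm (Imp (bigAnd xs) x).
Proof.
  intro Hx; apply KP_taut; intro v; simpl; rewrite peval_bigAnd.
  destruct (forallb (peval v) xs) eqn:E; [|reflexivity].
  rewrite forallb_forall in E; rewrite (E x Hx); reflexivity.
Qed.

Definition Der (G : form L -> Prop) (a : form L) : Prop :=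
  exists s, (forall x, In x s -> G x) /\ Thm (Imp (bigAnd s) a).

Definition Cons (G : form L -> Prop) : Prop := ~ Der G Bot.

Definition MCS (G : form L -> Prop) : Prop := Cons G /\ forall a, G a \/ G (Neg a).

Lemma der_thm G a : Thm a -> Der G a.
Proof.
  intro H; exists []; split; [intros x []|].
  apply (thm_tauto [a]); [premises; exact H|solve_tautology].
Qed.

Lemma der_in (G : form L -> Prop) a : G a -> Der G a.
Proof.
  intro H; exists [a]; split; [intros x [<-|[]]; exact H|].
  apply KP_taut; solve_tautology.
Qed.

Lemma der_mp {G : form L -> Prop} {a b : form L} : Der G a -> Der G (Imp a b) -> Der G b.
Proof.
  intros [s1 [H1 T1]] [s2 [H2 T2]]; exists (s1 ++ s2); split.
  { intros x Hx; apply in_app_or in Hx as [Hx|Hx]; auto. }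
  assert (Happ : Thm (Imp (bigAnd (s1 ++ s2)) (And (bigAnd s1) (bigAnd s2)))).
  { apply KP_taut; intro v; simpl; rewrite !peval_bigAnd, forallb_app.
    destruct (forallb (peval v) s1), (forallb (peval v) s2); reflexivity. }
  apply (thm_tauto [Imp (bigAnd s1) a; Imp (bigAnd s2) (Imp a b);
                    Imp (bigAnd (s1 ++ s2)) (And (bigAnd s1) (bigAnd s2))]);
    [premises; assumption|solve_tautology].
Qed.

Lemma der_tauto G xs y : Forall (Der G) xs -> tautology (imps xs y) -> Der G y.
Proof.
  intros Hxs Ht; apply (KP_taut Sig), (der_thm G) in Ht; revert Ht.
  induction Hxs as [|x xs Hx _ IH]; simpl; [auto|].
  intro H; exact (IH (der_mp Hx H)).
Qed.

Lemma deduction G a b : Der (fun u => G u \/ u = a) b -> Der G (Imp a b).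
Proof.
  intros [s [Hs Ts]]; revert b Ts; induction s as [|x s IH]; intros b Ts.
  - exists []; split; [intros x []|].
    apply (thm_tauto [Imp (bigAnd []) b]); [premises; exact Ts|solve_tautology].
  - assert (Ts' : Thm (Imp (bigAnd s) (Imp x b))).
    { apply (thm_tauto [Imp (bigAnd (x :: s)) b]); [premises; exact Ts|solve_tautology]. }
    destruct (IH (fun y Hy => Hs y (or_intror Hy)) _ Ts') as [s' [Hs' Ts'']].
    destruct (Hs x (or_introl eq_refl)) as [Gx| ->].
    + exists (x :: s'); split; [intros y [<-|Hy]; auto|].
      apply (thm_tauto [Imp (bigAnd s') (Imp a (Imp x b))]); [premises; exact Ts''|solve_tautology].
    + exists s'; split; [exact Hs'|].
      apply (thm_tauto [Imp (bigAnd s') (Imp a (Imp a b))]); [premises; exact Ts''|solve_tautology].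
Qed.

Section MaximalConsistent.
Context {G : form L -> Prop} (HG : MCS G).

Lemma mcs_der {a} : Der G a -> G a.
Proof.
  intro Ha; destruct (proj2 HG a) as [Ga|Gn]; [exact Ga|].
  exfalso; apply (proj1 HG), (der_mp Ha), der_in, Gn.
Qed.

Lemma mcs_thm {a} : Thm a -> G a.
Proof. intro H; apply mcs_der, der_thm, H. Qed.

Lemma mcs_tauto xs y : Forall G xs -> tautology (imps xs y) -> G y.
Proof.
  intros Hxs Ht; apply mcs_der, (der_tauto G xs); [|exact Ht].
  eapply Forall_impl; [|exact Hxs]; exact (der_in G).
Qed.

Lemma mcs_bot : ~ G Bot.
Proof. intro H; apply (proj1 HG), der_in, H. Qed.

Lemma mcs_neg a : G (Neg a) <-> ~ G a.
Proof.
  split.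
  - intros Gn Ga; apply mcs_bot, (mcs_tauto [a; Neg a]); [premises; assumption|solve_tautology].
  - intro Na; destruct (proj2 HG a); tauto.
Qed.

Lemma mcs_imp a b : G (Imp a b) <-> (G a -> G b).
Proof.
  split.
  - intros Gi Ga; apply (mcs_tauto [a; Imp a b]); [premises; assumption|solve_tautology].
  - intro H; destruct (proj2 HG a) as [Ga|Gn].
    + apply (mcs_tauto [b]); [premises; auto|solve_tautology].
    + apply (mcs_tauto [Neg a]); [premises; auto|solve_tautology].
Qed.

Lemma mcs_mp {a b} : Thm (Imp a b) -> G a -> G b.
Proof. intro H; exact (proj1 (mcs_imp a b) (mcs_thm H)). Qed.

Lemma mcs_bigAnd xs : Forall G xs -> G (bigAnd xs).
Proof.
  induction 1 as [|x xs Hx _ IH]; simpl.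
  - apply mcs_thm, KP_taut; solve_tautology.
  - apply (mcs_tauto [x; bigAnd xs]); [premises; assumption|solve_tautology].
Qed.

Lemma mcs_bigOr xs : G (bigOr xs) -> exists x, In x xs /\ G x.
Proof.
  induction xs as [|x xs IH]; simpl; intro H.
  - exfalso; exact (mcs_bot H).
  - destruct (proj2 HG x) as [Gx|Gn]; [exists x; auto|].
    destruct (IH (proj1 (mcs_imp _ _) H Gn)) as [y [Hy Gy]]; exists y; auto.
Qed.

End MaximalConsistent.

Lemma lindenbaum {G : form L -> Prop} : Cons G -> exists M, MCS M /\ forall x, G x -> M x.
Proof.
  intro CG.
  destruct (zorn_maximal_superset Cons G CG) as [M [GM [CM Mmax]]].
  - intros F Fne FC Fchain [s [Hs Ts]].
    destruct (chain_union_list F s Fne Fchain) as [X [FX HX]].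
    apply (FC X FX); exists s; split; auto.
  - exists M; split; [split; [exact CM|]|exact GM].
    intro a; apply NNPP; intro N.
    (* neither [a] nor [Neg a] can be added, so [M] refutes both *)
    assert (Da : Der M (Neg a)).
    { apply deduction, NNPP; intro Ca; apply N; left; apply Mmax, Ca. }
    assert (Dn : Der M (Neg (Neg a))).
    { apply deduction, NNPP; intro Cn; apply N; right; apply Mmax, Cn. }
    apply CM, (der_tauto M [Neg a; Neg (Neg a)]); [premises; assumption|solve_tautology].
Qed.

Definition CW : Type := { G : form L -> Prop | MCS G }.

Definition CF : frame L :=
  @Frame L CW (fun l G H => forall x, proj1_sig G (Box l x) -> proj1_sig H x).

Definition CV (p : nat) (G : W CF) : Prop := proj1_sig G (Var p).

Lemma mcs_box_witness {G} l a :
  MCS G -> ~ G (Box l a) -> exists M, MCS M /\ (forall x, G (Box l x) -> M x) /\ ~ M a.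
Proof.
  intros HG Nb.
  assert (C : Cons (fun u => G (Box l u) \/ u = Neg a)).
  { intro Dd; apply deduction in Dd as [s [Hs Ts]]; apply Nb.
    apply (mcs_tauto HG [bigAnd (map (Box l) s); Imp (bigAnd (map (Box l) s)) (Box l a)]);
      [premises|solve_tautology].
    - apply (mcs_bigAnd HG), Forall_forall; intros y Hy.
      apply in_map_iff in Hy as [z [<- Hz]]; apply Hs, Hz.
    - apply (mcs_thm HG), (thm_tauto [Imp (bigAnd (map (Box l) s)) (Box l (bigAnd s));
                                      Imp (Box l (bigAnd s)) (Box l a)]);
        [premises|solve_tautology].
      + apply thm_box_bigAnd.
      + apply thm_box_mono, (thm_tauto [Imp (bigAnd s) (Imp (Neg a) Bot)]);
          [premises; exact Ts|solve_tautology]. }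
  destruct (lindenbaum C) as [M [HM GM]]; exists M; split; [exact HM|split].
  - intros x Gx; apply GM; left; exact Gx.
  - intro Ma; apply (mcs_neg HM a); [apply GM; right|]; auto.
Qed.

Lemma truth_lemma a (G : W CF) : sat CF CV G a <-> proj1_sig G a.
Proof.
  revert G; induction a as [p| |a IHa b IHb|l a IH]; intros [G HG]; simpl.
  - reflexivity.
  - split; [tauto|exact (mcs_bot HG)].
  - rewrite (mcs_imp HG), (IHa (exist _ G HG)), (IHb (exist _ G HG)); reflexivity.
  - split.
    + intro H; apply NNPP; intro Nb.
      destruct (mcs_box_witness l a HG Nb) as [M [HM [GM Ma]]].
      apply Ma, (IH (exist _ M HM)), H; exact GM.
    + intros H [M HM] GM; apply IH, GM, H.
Qed.

Lemma canonical_completeness (C : frame L -> Prop) : C CF -> forall a, Log C a -> Thm a.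
Proof.
  intros HC a Ha; apply NNPP; intro Na.
  assert (Cn : Cons (fun u => False \/ u = Neg a)).
  { intro Dn; apply deduction in Dn as [[|x s] [Hs Ts]]; [|exact (Hs x (or_introl eq_refl))].
    apply Na, (thm_tauto [Imp (bigAnd []) (Imp (Neg a) Bot)]); [premises; exact Ts|solve_tautology]. }
  destruct (lindenbaum Cn) as [M [HM GM]].
  apply (mcs_neg HM a); [apply GM; right; reflexivity|].
  apply (truth_lemma a (exist _ M HM)), Ha, HC.
Qed.

End Derivability.

Arguments Der {L} Sig G a.
Arguments Cons {L} Sig G.
Arguments MCS {L} Sig G.
Arguments CW {L} Sig.
Arguments CF {L} Sig.
Arguments CV {L} Sig p G.

Section Semantics.
Context {L : Type} (F : frame L) (V : nat -> W F -> Prop).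

Lemma sat_And w a b : sat F V w (And a b) <-> sat F V w a /\ sat F V w b.
Proof. simpl; split; [|tauto]. intro H; split; apply NNPP; tauto. Qed.

Lemma sat_bigAnd w s : sat F V w (bigAnd s) <-> Forall (sat F V w) s.
Proof.
  induction s as [|x s IH]; simpl bigAnd.
  - split; [constructor|simpl; tauto].
  - rewrite sat_And, IH, Forall_cons_iff; reflexivity.
Qed.

Lemma sat_bigOr w s : sat F V w (bigOr s) <-> exists x, In x s /\ sat F V w x.
Proof.
  induction s as [|x s IH]; simpl.
  - split; [tauto|intros [_ [[] _]]].
  - split.
    + intro H; destruct (classic (sat F V w x)) as [Hx|Hx]; [exists x; auto|].
      destruct (proj1 IH (H Hx)) as [y [Hy Sy]]; exists y; auto.
    + intros [y [[<-|Hy] Sy]] Hn; [tauto|]. apply IH; eauto.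
Qed.

Lemma sat_Dia w l a v : R F l w v -> sat F V v a -> sat F V w (Dia l a).
Proof. simpl; intros Hr Ha H; exact (H v Hr Ha). Qed.

Lemma sat_tautology w a : tautology a -> sat F V w a.
Proof.
  intro Ha.
  set (v := fun x => if excluded_middle_informative (sat F V w x) then true else false).
  enough (E : forall x, peval v x = true <-> sat F V w x) by apply E, Ha.
  induction x as [p| |a1 IH1 a2 IH2|l a1 IH]; simpl.
  - unfold v; destruct (excluded_middle_informative _); split; congruence || tauto.
  - split; [discriminate|tauto].
  - rewrite <- IH1, <- IH2; destruct (peval v a1), (peval v a2); simpl; intuition congruence.
  - unfold v; destruct (excluded_middle_informative _); split; congruence || tauto.
Qed.

End Semantics.

Lemma sat_subst {L} (F : frame L) V s a w :
  sat F V w (subst s a) <-> sat F (fun p u => sat F V u (s p)) w a.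
Proof.
  revert w; induction a as [p| |a1 IH1 a2 IH2|l a1 IH]; intro w; simpl; try tauto.
  - rewrite IH1, IH2; tauto.
  - split; intros H v Hv; apply IH; auto.
Qed.

Lemma In_flat_map_edges_from {L A} (E : list (nat * L * nat)) (g : L -> nat -> A) i x :
  In x (flat_map (fun '(y, l, k) => if Nat.eqb y i then [g l k] else []) E) <->
  exists l k, In (i, l, k) E /\ x = g l k.
Proof.
  rewrite in_flat_map; split.
  - intros [[[y l] k] [He Hx]]; destruct (Nat.eqb y i) eqn:Ey; [|destruct Hx].
    apply Nat.eqb_eq in Ey; subst; destruct Hx as [<-|[]]; exists l, k; auto.
  - intros [l [k [He ->]]]; exists (i, l, k); split; [exact He|].
    rewrite Nat.eqb_refl; left; reflexivity.
Qed.

Lemma In_words {A} (s : list A) w : incl w s -> In w (words (length w) s).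
Proof.
  induction w as [|a w IH]; simpl; intro H; [auto|].
  apply in_flat_map; exists a; split; [apply H; left; reflexivity|].
  apply in_map, IH; intros x Hx; apply H; right; exact Hx.
Qed.

Lemma In_words_inv {A} (s : list A) N w : In w (words N s) -> length w = N /\ incl w s.
Proof.
  revert w; induction N as [|N IH]; simpl; intros w H.
  - destruct H as [<-|[]]; split; [reflexivity|intros x []].
  - apply in_flat_map in H as [a [Ha H]]; apply in_map_iff in H as [w' [<- H]].
    destruct (IH _ H) as [E1 E2]; split; [simpl; congruence|].
    intros x [<-|Hx]; auto.
Qed.

Lemma words_choice {A} (s : list A) (dflt : A) N (P : nat -> A -> Prop) :
  (forall i, i < N -> exists x, In x s /\ P i x) ->
  exists w, In w (words N s) /\ forall i, i < N -> P i (nth i w dflt).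
Proof.
  revert P; induction N as [|N IH]; intros P H.
  - exists []; split; [left; reflexivity|intros; lia].
  - destruct (IH (fun i => P (S i))) as [w [Hw Hp]]; [intros i Hi; apply H; lia|].
    destruct (H 0 ltac:(lia)) as [x [Hx Px]].
    exists (x :: w); split.
    + apply in_flat_map; exists x; split; [exact Hx|apply in_map, Hw].
    + intros [|i] Hi; simpl; [exact Px|apply Hp; lia].
Qed.

Section Paths.
Context {L : Type} {E : list (nat * L * nat)}.

Lemma dpath_sat_boxes {F : frame L} {V} {f : nat -> W F} {x p y a} :
  (forall i l k, In (i, l, k) E -> R F l (f i) (f k)) ->
  dpath E x p y -> sat F V (f x) (boxes (map fst p) a) -> sat F V (f y) a.
Proof.
  intros Hf; induction 1 as [x|x l y p z He Hp IH]; simpl; [auto|].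
  intro Hb; apply IH, Hb, Hf, He.
Qed.

Lemma dpath_target_edge {x p z v} : dpath E x p z -> In v (map snd p) -> exists u l, In (u, l, v) E.
Proof. induction 1 as [x|x l y p z He Hp IH]; simpl; [tauto|]. intros [<-|Hv]; eauto. Qed.

Lemma dpath_suffix {x p z y} :
  dpath E x p z -> In y (map snd p) -> exists q, dpath E y q z /\ length q < length p.
Proof.
  induction 1 as [x|x l y' p z He Hp IH]; simpl; [tauto|].
  intros [->|Hy]; [exists p; split; [exact Hp|lia]|].
  destruct (IH Hy) as [q [Hq Hl]]; exists q; split; [exact Hq|lia].
Qed.

Lemma dpath_NoDup_or_shorter {x p z} :
  dpath E x p z ->
  NoDup (map snd p) \/ exists q, dpath E x q z /\ length q < length p.
Proof.
  induction 1 as [x|x l y p z He Hp IH]; simpl.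
  - left; constructor.
  - destruct (classic (In y (map snd p))) as [Hy|Hy].
    + destruct (dpath_suffix Hp Hy) as [q [Hq Hl]].
      right; exists ((l, y) :: q); split; [econstructor; eauto|simpl; lia].
    + destruct IH as [Hnd|[q [Hq Hl]]]; [left; constructor; assumption|].
      right; exists ((l, y) :: q); split; [econstructor; eauto|simpl; lia].
Qed.

End Paths.

Lemma dpath_labels_indices {L} (D : diagram L) {E x p y} :
  (forall e, In e E -> In e (dedges D)) -> dpath E x p y -> incl (map fst p) (indices D).
Proof.
  intros HE; induction 1 as [x|x l y p z He Hp IH]; simpl; [intros ? []|].
  intros l' [<-|Hl]; [|auto]. apply in_map_iff; exists (x, l, y); split; auto.
Qed.

Lemma spanning_tree_short_path {L} (D : diagram L) T i :
  wf_diagram D -> spanning_tree D T -> 1 <= i <= dsize D ->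
  exists p, dpath T 0 p i /\ length p <= dsize D.
Proof.
  intros HwfD [HTs [HT0 HTu]] Hi.
  destruct (HTu i Hi) as [p [Hp Hu]]; exists p; split; [exact Hp|].
  assert (Hnd : NoDup (map snd p)).
  { destruct (dpath_NoDup_or_shorter Hp) as [Hnd|[q [Hq Hl]]]; [exact Hnd|].
    rewrite (Hu q Hq) in Hl; lia. }
  (* the targets along a path are distinct non-root points *)
  assert (Hincl : incl (map snd p) (seq 1 (dsize D))).
  { intros v Hv; destruct (dpath_target_edge Hp Hv) as [u [l Hul]].
    destruct (HwfD _ _ _ (HTs _ Hul)) as [_ Hv'].
    destruct v as [|v]; [exfalso; exact (HT0 u l Hul)|]; apply in_seq; lia. }
  pose proof (NoDup_incl_length Hnd Hincl) as HL.
  rewrite length_map, length_seq in HL; exact HL.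
Qed.

Section Soundness.
Context {L : Type} (D : diagram L) (T : list (nat * L * nat)) (d : nat)
  (HwfD : wf_diagram D) (HT : spanning_tree D T) (Hd : tree_depth D T d).

Lemma sat_chi {F : frame L} {V} {f : nat -> W F} {kap : nat -> form L} {i} :
  (forall i l k, In (i, l, k) (dedges D) -> R F l (f i) (f k)) ->
  (forall i, i <= dsize D -> sat F V (f i) (kap i)) ->
  i <= dsize D -> sat F V (f i) (chi D kap i).
Proof.
  intros Hf Hk Hi; apply sat_And; split; [exact (Hk i Hi)|].
  apply sat_bigAnd, Forall_forall; intros x Hx.
  apply In_flat_map_edges_from in Hx as [l [k [He ->]]].
  apply sat_Dia with (f k); [exact (Hf _ _ _ He)|apply Hk, (HwfD _ _ _ He)].
Qed.

Lemma sat_eta_aux (F : frame L) V (f : nat -> W F) (kap : nat -> form L) :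
  (forall i l k, In (i, l, k) (dedges D) -> R F l (f i) (f k)) ->
  (forall i, i <= dsize D -> sat F V (f i) (kap i)) ->
  forall fuel i, i <= dsize D -> sat F V (f i) (eta_aux D T kap fuel i).
Proof.
  intros Hf Hk; induction fuel as [|fuel IH]; intros i Hi; simpl eta_aux.
  - exact (sat_chi Hf Hk Hi).
  - apply sat_And; split; [exact (sat_chi Hf Hk Hi)|].
    apply sat_bigAnd, Forall_forall; intros x Hx.
    apply In_flat_map_edges_from in Hx as [l [k [He ->]]].
    pose proof (proj1 HT _ He) as HeD.
    apply sat_Dia with (f k); [exact (Hf _ _ _ HeD)|apply IH, (HwfD _ _ _ HeD)].
Qed.

Lemma valid_gamma_m F m : frame_cond D F -> valid F (gamma_m D T d m).
Proof.
  intros Hc V w Hbox; destruct (Hc w) as [f [f0 Hf]].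
  (* [Box^{<=d}] reaches every point along its tree path, so some [p_j] holds there *)
  assert (Hps : forall i, i < S (dsize D) -> exists x, In x (ps m) /\ sat F V (f i) x).
  { intros i Hi; apply sat_bigOr.
    assert (Hp : exists p, dpath T 0 p i).
    { destruct i as [|i]; [exists []; constructor|].
      destruct (proj2 (proj2 HT) (S i)) as [p [Hp _]]; [lia|eauto]. }
    destruct Hp as [p Hp].
    apply (dpath_sat_boxes (fun i l k He => Hf i l k (proj1 HT _ He)) Hp).
    rewrite f0; unfold box_upto in Hbox; rewrite sat_bigAnd, Forall_forall in Hbox.
    apply Hbox, in_flat_map; exists (length p); split.
    - apply in_seq; pose proof (proj1 Hd i p ltac:(lia) Hp); lia.
    - apply in_map_iff; exists (map fst p); split; [reflexivity|].
      rewrite <- (length_map fst p) at 1.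
      apply In_words, (dpath_labels_indices D (proj1 HT) Hp). }
  destruct (words_choice (ps m) Bot (S (dsize D)) (fun i x => sat F V (f i) x) Hps) as [ws [Hws Hs]].
  apply sat_bigOr; exists (eta D T (fun i => nth i ws Bot)); split.
  - apply in_map_iff; exists ws; split; [reflexivity|exact Hws].
  - unfold eta; rewrite <- f0; apply sat_eta_aux; [exact Hf| |lia].
    intros i Hi; apply Hs; lia.
Qed.

Lemma soundness a : KPlus (fun b => exists m, b = gamma_m D T d m) a -> Log (frame_cond D) a.
Proof.
  intros H F Hc; induction H as [a Ht|l a b|a [m ->]|a b _ IH1 _ IH2|l a _ IH|s a _ IH];
    intros V w.
  - exact (sat_tautology F V w a Ht).
  - simpl; intros H1 H2 v Hv; apply H1; auto.
  - exact (valid_gamma_m F m Hc V w).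
  - exact (IH1 V w (IH2 V w)).
  - simpl; intros; apply IH.
  - apply sat_subst, IH.
Qed.

End Soundness.

Lemma subst_And {L} s (a b : form L) : subst s (And a b) = And (subst s a) (subst s b).
Proof. reflexivity. Qed.

Lemma subst_bigAnd {L} s (xs : list (form L)) : subst s (bigAnd xs) = bigAnd (map (subst s) xs).
Proof. induction xs as [|x xs IH]; simpl; [reflexivity|]. rewrite <- IH; reflexivity. Qed.

Lemma subst_bigOr {L} s (xs : list (form L)) : subst s (bigOr xs) = bigOr (map (subst s) xs).
Proof. induction xs as [|x xs IH]; simpl; [reflexivity|]. rewrite <- IH; reflexivity. Qed.

Lemma subst_boxes {L} s ls (a : form L) : subst s (boxes ls a) = boxes ls (subst s a).
Proof. induction ls as [|l ls IH]; simpl; [reflexivity|]. rewrite IH; reflexivity. Qed.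

Lemma subst_flat_map_edges_from {L} s (E : list (nat * L * nat)) i (g : L -> nat -> form L) :
  map (subst s) (flat_map (fun '(y, l, k) => if Nat.eqb y i then [g l k] else []) E) =
  flat_map (fun '(y, l, k) => if Nat.eqb y i then [subst s (g l k)] else []) E.
Proof.
  induction E as [|[[y l] k] E IH]; simpl; [reflexivity|].
  rewrite map_app, IH; destruct (Nat.eqb y i); reflexivity.
Qed.

Lemma subst_chi {L} (D : diagram L) s j i :
  subst s (chi D j i) = chi D (fun k => subst s (j k)) i.
Proof.
  unfold chi; rewrite subst_And, subst_bigAnd, subst_flat_map_edges_from; reflexivity.
Qed.

Lemma subst_eta {L} (D : diagram L) T s j :
  subst s (eta D T j) = eta D T (fun k => subst s (j k)).
Proof.
  unfold eta; generalize (S (dsize D)) 0.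
  induction n as [|fuel IH]; intro i; simpl eta_aux; [apply subst_chi|].
  rewrite subst_And, subst_chi, subst_bigAnd, subst_flat_map_edges_from.
  do 2 f_equal; apply flat_map_ext; intros [[y l] k]; destruct (Nat.eqb y i); [cbn [subst Dia Neg]; rewrite IH|]; reflexivity.
Qed.

(* The atoms of the Boolean algebra generated by G: all conjunctions of the
   members of G or their negations.  Exactly one atom holds under any valuation. *)
Fixpoint atoms {L} (G : list (form L)) : list (form L) :=
  match G with
  | [] => [Top]
  | p :: G' => flat_map (fun x => [And p x; And (Neg p) x]) (atoms G')
  end.

Lemma atoms_cover {L} (G : list (form L)) : tautology (bigOr (atoms G)).
Proof.
  intro v; rewrite peval_bigOr; apply existsb_exists.
  induction G as [|p G [x [Hx Px]]]; simpl.
  - exists Top; simpl; auto.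
  - destruct (peval v p) eqn:Ep; [exists (And p x)|exists (And (Neg p) x)];
      (split; [apply in_flat_map; exists x; simpl; auto|simpl; rewrite Ep, Px; reflexivity]).
Qed.

Lemma atoms_decide {L} (G : list (form L)) x p : In x (atoms G) -> In p G ->
  tautology (Imp x p) \/ tautology (Imp x (Neg p)).
Proof.
  revert x; induction G as [|q G IH]; intros x Hx Hp; [destruct Hp|].
  simpl in Hx; apply in_flat_map in Hx as [y [Hy Hx]].
  destruct Hp as [<-|Hp].
  - destruct Hx as [<-|[<-|[]]]; [left|right]; solve_tautology.
  - destruct (IH y Hy Hp) as [Ty|Ty]; [left|right];
      destruct Hx as [<-|[<-|[]]]; intro v; specialize (Ty v); simpl in *;
      destruct (peval v q), (peval v y), (peval v p); simpl in *; congruence.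
Qed.

Lemma map_nth_seq1 {A} (xs : list A) (dflt : A) :
  map (fun p => nth (p - 1) xs dflt) (seq 1 (length xs)) = xs.
Proof.
  rewrite <- seq_shift, map_map; simpl.
  erewrite map_ext; [|intro x; rewrite Nat.sub_0_r; reflexivity].
  induction xs as [|a xs IH]; simpl; [reflexivity|f_equal].
  rewrite <- seq_shift, map_map; exact IH.
Qed.

Section Completeness.
Context {L : Type} (D : diagram L) (T : list (nat * L * nat)) (d : nat)
  (HwfD : wf_diagram D) (HT : spanning_tree D T).

Definition gamma_axioms : form L -> Prop := fun b => exists m, b = gamma_m D T d m.

Notation Thm := (KPlus gamma_axioms).
Notation n := (dsize D).

Lemma thm_subst_box_upto s Y : Thm (subst s Y) -> Thm (subst s (box_upto D d Y)).
Proof.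
  intro H; unfold box_upto; rewrite subst_bigAnd; apply thm_bigAnd, Forall_forall.
  intros x Hx; apply in_map_iff in Hx as [z [<- Hz]].
  apply in_flat_map in Hz as [k [_ Hz]]; apply in_map_iff in Hz as [ls [<- _]].
  rewrite subst_boxes; clear -H; induction ls; simpl; [exact H|apply KP_Nec, IHls].
Qed.

Lemma thm_eta_root kap : Thm (Imp (eta D T kap) (kap 0)).
Proof. apply KP_taut; unfold eta, chi; simpl eta_aux; solve_tautology. Qed.

Lemma thm_chi_label kap i : Thm (Imp (chi D kap i) (kap i)).
Proof. apply KP_taut; unfold chi; solve_tautology. Qed.

Lemma thm_chi_dia kap i l k : In (i, l, k) (dedges D) -> Thm (Imp (chi D kap i) (Dia l (kap k))).
Proof.
  intro He; unfold chi.
  apply (thm_tauto [Imp (bigAnd (flat_map (fun '(x, l0, k0) =>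
                       if Nat.eqb x i then [Dia l0 (kap k0)] else []) (dedges D)))
                     (Dia l (kap k))]); [premises|solve_tautology].
  apply thm_bigAnd_elem, (In_flat_map_edges_from _ (fun l k => Dia l (kap k))).
  exists l, k; auto.
Qed.

Lemma thm_neg_dia l a : Thm (Neg a) -> Thm (Neg (Dia l a)).
Proof.
  intro H; apply (thm_tauto [Box l (Neg a)]); [premises; apply KP_Nec, H|solve_tautology].
Qed.

Lemma thm_neg_eta_aux {kap i} : Thm (Neg (chi D kap i)) ->
  forall p fuel x, dpath T x p i -> length p <= fuel -> Thm (Neg (eta_aux D T kap fuel x)).
Proof.
  intros Hc p; induction p as [|[l y] p IH]; intros fuel x Hp Hl; inversion Hp; subst.
  - destruct fuel; simpl; [exact Hc|].
    apply (thm_tauto [Neg (chi D kap i)]); [premises; exact Hc|solve_tautology].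
  - destruct fuel as [|fuel]; [simpl in Hl; lia|simpl eta_aux].
    set (xs := flat_map (fun '(y0, l0, k) =>
                 if Nat.eqb y0 x then [Dia l0 (eta_aux D T kap fuel k)] else []) T).
    apply (thm_tauto [Imp (bigAnd xs) (Dia l (eta_aux D T kap fuel y));
                      Neg (Dia l (eta_aux D T kap fuel y))]); [premises|solve_tautology].
    + apply thm_bigAnd_elem, (In_flat_map_edges_from _ (fun l k => Dia l (eta_aux D T kap fuel k))).
      exists l, y; auto.
    + apply thm_neg_dia, IH; [assumption|simpl in Hl; lia].
Qed.

(* [eta] nests the diamonds of a tree path to every point, so a refutable [chi_i]
   makes [eta] refutable. *)
Lemma thm_neg_eta {kap i} : i <= n -> Thm (Neg (chi D kap i)) -> Thm (Neg (eta D T kap)).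
Proof.
  intros Hi Hc; unfold eta.
  destruct i as [|i].
  - apply (thm_neg_eta_aux Hc [] (S n) 0); [constructor|simpl; lia].
  - destruct (spanning_tree_short_path D T (S i) HwfD HT ltac:(lia)) as [p [Hp Hl]].
    apply (thm_neg_eta_aux Hc p (S n) 0); [exact Hp|lia].
Qed.

Definition decides (x p : form L) : Prop := Thm (Imp x p) \/ Thm (Imp x (Neg p)).

Section CanonicalPoint.
Context (G0 : form L -> Prop) (M0 : MCS gamma_axioms G0).

(* Instantiating [p_1, ..., p_m] by the atoms of [G] in [gamma_m] yields an
   [eta] in [G0] whose labels are atoms, and atoms decide every member of [G]. *)
Lemma exists_deciding_labelling (G : list (form L)) :
  exists kap, G0 (eta D T kap) /\ forall i, i <= n -> forall p, In p G -> decides (kap i) p.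
Proof.
  set (A := atoms G); set (m := length A); set (s := fun p => nth (p - 1) A Bot).
  assert (Hps : map (subst s) (ps m) = A).
  { unfold ps; rewrite map_map; apply map_nth_seq1. }
  assert (Hg : Thm (subst s (gamma_m D T d m))) by (apply KP_US, KP_ax; exists m; auto).
  assert (Hb : Thm (subst s (box_upto D d (bigOr (ps m))))).
  { apply thm_subst_box_upto; rewrite subst_bigOr, Hps; apply KP_taut, atoms_cover. }
  pose proof (mcs_thm M0 (KP_MP Hg Hb)) as HG.
  unfold gammaPsi in HG; rewrite subst_bigOr, map_map in HG.
  destruct (mcs_bigOr M0 _ HG) as [x [Hx Gx]].
  apply in_map_iff in Hx as [w [<- Hw]]; rewrite subst_eta in Gx.
  exists (fun k => subst s (nth k w Bot)); split; [exact Gx|].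
  intros i Hi p Hp; destruct (In_words_inv _ _ _ Hw) as [Lw Ew].
  assert (Hin : In (nth i w Bot) (ps m)) by (apply Ew, nth_In; lia).
  unfold ps in Hin; apply in_map_iff in Hin as [q [<- Hq]]; apply in_seq in Hq.
  assert (HA : In (s q) A) by (apply nth_In; unfold m in Hq; lia).
  destruct (atoms_decide G (s q) p HA Hp) as [H|H]; [left|right]; apply KP_taut, H.
Qed.

Lemma chi_consistent {kap i} : G0 (eta D T kap) -> i <= n -> ~ Thm (Neg (chi D kap i)).
Proof. intros Hk Hi Hc; exact (mcs_bot M0 (mcs_mp M0 (thm_neg_eta Hi Hc) Hk)). Qed.

(* A point-indexed family [A] of requirements (the formulas [p] with [A (i, p)]
   should hold at point [i]) is good if every finite part of it is realised by
   labels forming an [eta] in [G0]. *)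
Definition realises (A : nat * form L -> Prop) (G : list (form L)) (kap : nat -> form L) :=
  G0 (eta D T kap) /\
  forall i, i <= n -> forall p, In p G -> decides (kap i) p /\ (A (i, p) -> Thm (Imp (kap i) p)).

Definition good (A : nat * form L -> Prop) : Prop := forall G, exists kap, realises A G kap.

Lemma realises_incl A G G' kap : incl G G' -> realises A G' kap -> realises A G kap.
Proof. intros HG [Hk H]; split; [exact Hk|]. intros i Hi p Hp; apply H; auto. Qed.

Lemma realises_add A G kap i q :
  realises A G kap -> Thm (Imp (kap i) q) -> realises (fun u => A u \/ u = (i, q)) G kap.
Proof.
  intros [Hk H] Hq; split; [exact Hk|].
  intros j Hj p Hp; destruct (H j Hj p Hp) as [Hd HA]; split; [exact Hd|].
  intros [Ap|Eq]; [exact (HA Ap)|injection Eq as -> ->; exact Hq].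
Qed.

Lemma good_root : good (fun q => fst q = 0 /\ G0 (snd q)).
Proof.
  intro G; destruct (exists_deciding_labelling G) as [kap [Hk Hdec]].
  exists kap; split; [exact Hk|]; intros i Hi p Hp; split; [exact (Hdec i Hi p Hp)|].
  intros [Hi0 Gp]; simpl in Hi0, Gp; subst i.
  destruct (Hdec 0 Hi p Hp) as [H|H]; [exact H|exfalso].
  exact (proj1 (mcs_neg M0 p) (mcs_mp M0 H (mcs_mp M0 (thm_eta_root kap) Hk)) Gp).
Qed.

Lemma good_chain_union F :
  (exists X, F X) -> (forall X, F X -> good X) -> chain F -> good (chain_union F).
Proof.
  intros Fne Fgood Fchain G.
  destruct (chain_union_list F (list_prod (seq 0 (S n)) G) Fne Fchain) as [X [FX HX]].
  destruct (Fgood X FX G) as [kap [Hk H]]; exists kap; split; [exact Hk|].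
  intros i Hi p Hp; destruct (H i Hi p Hp) as [Hd HXp]; split; [exact Hd|].
  intro HU; apply HXp, HX; [apply in_prod; [apply in_seq; lia|exact Hp]|exact HU].
Qed.

Section MaximalGood.
Variable M : nat * form L -> Prop.
Hypotheses (M_root : forall p, G0 p -> M (0, p)) (M_good : good M)
  (M_max : forall q, good (fun u => M u \/ u = q) -> M q).

Lemma good_complete i p : i <= n -> M (i, p) \/ M (i, Neg p).
Proof.
  intro Hi; apply NNPP; intro N.
  assert (N1 : ~ good (fun u => M u \/ u = (i, p))) by (intro H; apply N; left; apply M_max, H).
  assert (N2 : ~ good (fun u => M u \/ u = (i, Neg p))) by (intro H; apply N; right; apply M_max, H).
  apply not_all_ex_not in N1 as [G1 N1]; apply not_all_ex_not in N2 as [G2 N2].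
  destruct (M_good (p :: G1 ++ G2)) as [kap Hkap].
  destruct (proj1 (proj2 Hkap i Hi p (or_introl eq_refl))) as [Hp|Hp].
  - apply N1; exists kap; apply realises_add; [|exact Hp].
    apply (realises_incl _ _ (p :: G1 ++ G2)); [intros x Hx; simpl; auto using in_or_app|exact Hkap].
  - apply N2; exists kap; apply realises_add; [|exact Hp].
    apply (realises_incl _ _ (p :: G1 ++ G2)); [intros x Hx; simpl; auto using in_or_app|exact Hkap].
Qed.

Lemma good_consistent {i} : i <= n -> Cons gamma_axioms (fun p => M (i, p)).
Proof.
  intros Hi [s [Hs Ts]]; destruct (M_good s) as [kap [Hk Hkap]].
  apply (chi_consistent Hk Hi).
  assert (Hs' : Thm (Imp (kap i) (bigAnd s))).
  { apply thm_imp_bigAnd, Forall_forall; intros x Hx; apply (Hkap i Hi x Hx), Hs, Hx. }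
  apply (thm_tauto [Imp (chi D kap i) (kap i); Imp (kap i) (bigAnd s); Imp (bigAnd s) Bot]);
    [premises; auto using thm_chi_label|solve_tautology].
Qed.

Lemma good_mcs {i} : i <= n -> MCS gamma_axioms (fun p => M (i, p)).
Proof. intro Hi; split; [exact (good_consistent Hi)|intro p; exact (good_complete i p Hi)]. Qed.

Lemma good_edge {i l k x} : In (i, l, k) (dedges D) -> M (i, Box l x) -> M (k, x).
Proof.
  intros He Mi; destruct (HwfD _ _ _ He) as [Hi Hk].
  destruct (good_complete k x Hk) as [Mk|Mk]; [exact Mk|exfalso].
  destruct (M_good [Box l x; Neg x]) as [kap [Hkap Hdec]].
  apply (chi_consistent Hkap Hi).
  assert (Hbox : Thm (Imp (kap i) (Box l x))) by (apply (Hdec i Hi); simpl; auto).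
  assert (Hneg : Thm (Imp (kap k) (Neg x))) by (apply (Hdec k Hk); simpl; auto).
  (* [kap i] forces [Box l x] while [chi_i] asks for [Dia l (kap k)] with [kap k -> Neg x] *)
  assert (Hbox' : Thm (Imp (Box l x) (Box l (Neg (kap k))))).
  { apply thm_box_mono, (thm_tauto [Imp (kap k) (Neg x)]); [premises; exact Hneg|solve_tautology]. }
  apply (thm_tauto [Imp (chi D kap i) (kap i); Imp (kap i) (Box l x);
                    Imp (Box l x) (Box l (Neg (kap k))); Imp (chi D kap i) (Dia l (kap k))]);
    [premises; auto using thm_chi_label, thm_chi_dia|solve_tautology].
Qed.

Lemma good_root_iff p : M (0, p) <-> G0 p.
Proof.
  split; [|exact (M_root p)].
  intro Mp; apply NNPP; intro N; apply (mcs_neg M0) in N.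
  exact (proj1 (mcs_neg (good_mcs (Nat.le_0_l n)) p) (M_root _ N) Mp).
Qed.

End MaximalGood.

Lemma canonical_successors :
  exists f : nat -> W (CF gamma_axioms),
    f 0 = exist _ G0 M0 /\ forall i l k, In (i, l, k) (dedges D) -> R (CF gamma_axioms) l (f i) (f k).
Proof.
  destruct (zorn_maximal_superset good _ good_root good_chain_union) as [M [HM0 [HM Mmax]]].
  assert (M_root : forall p, G0 p -> M (0, p)) by (intros p Gp; apply HM0; split; auto).
  exists (fun j => match le_dec j n with
           | left Hj => exist _ (fun p => M (j, p)) (good_mcs M HM Mmax Hj)
           | right _ => exist _ G0 M0
           end); split.
  - destruct (le_dec 0 n) as [H0|H0]; [|lia].
    assert (E : (fun p => M (0, p)) = G0).
    { apply functional_extensionality; intro p.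
      apply propositional_extensionality, (good_root_iff M M_root HM Mmax). }
    generalize (good_mcs M HM Mmax H0); rewrite E; intro; f_equal; apply proof_irrelevance.
  - intros i l k He; destruct (HwfD _ _ _ He) as [Hi Hk].
    destruct (le_dec i n) as [Hi'|]; [|lia]; destruct (le_dec k n) as [Hk'|]; [|lia].
    intros x Hx; exact (good_edge M HM Mmax He Hx).
Qed.

End CanonicalPoint.

Lemma canonical_frame_cond : frame_cond D (CF gamma_axioms).
Proof. intros [G0 M0]; exact (canonical_successors G0 M0). Qed.

End Completeness.

Theorem mainTheorem2 (L : Type) (D : diagram L) (T : list (nat * L * nat)) (d : nat)
  (HwfD : wf_diagram D) (Hroot : rooted D)
  (HT : spanning_tree D T) (Hd : tree_depth D T d) :
  forall a : form L,
    Log (frame_cond D) a <-> KPlus (fun b => exists m, b = gamma_m D T d m) a.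
Proof.
  intro a; split.
  - apply canonical_completeness, (canonical_frame_cond D T d HwfD HT).
  - apply (soundness D T d HwfD HT Hd).
Qed.
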